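(* Let $t<n/2$ and let $\nu\vdash 2n$ be a non-fat even partition. Then the trivial representation of $K=S_{2(n-t)}\times H_t$ does not occur in the restriction $S^\nu\downarrow^{S_{2n}}_K$.
   Context: $S^\nu$ is the irreducible representation of $S_{2n}$ indexed by $\nu\vdash 2n$. $K=S_{2(n-t)}\times H_t\le S_{2n}$, where $S_{2(n-t)}$ is the symmetric group on a fixed set of $2(n-t)$ points and $H_t\cong S_2\wr S_t$ is the stabilizer of a fixed perfect matching of the complementary $2t$ points. A partition $\nu\vdash 2n$ is even if $\nu=2\lambda=(2\lambda_1,2\lambda_2,\dots)$ for some $\lambda\vdash n$; it is fat if $\nu\ge 2(n-t,1^t)=(2(n-t),2,\dots,2)$ in reverse-lexicographic order ($\mu\le\lambda$ iff $\mu=\lambda$ or $\mu_j<\lambda_j$ at the first differing index $j$), and non-fat otherwise. *)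

From mathcomp Require Import all_boot all_order all_algebra all_fingroup.
Set Implicit Arguments. Unset Strict Implicit. Unset Printing Implicit Defensive.
Import GRing.Theory.

Definition is_partition (m : nat) (s : seq nat) : bool :=
  [&& sorted geq s, all (fun x => 0 < x) s & sumn s == m].

Definition even_partition (n : nat) (nu : seq nat) : Prop :=
  exists la, is_partition n la /\ nu = map double la.

Definition revlex_le (mu la : seq nat) : Prop :=
  mu = la \/ exists j, (forall i, i < j -> nth 0 mu i = nth 0 la i) /\ nth 0 mu j < nth 0 la j.

Definition fat (n t : nat) (nu : seq nat) : Prop :=
  revlex_le ((n - t).*2 :: nseq t 2) nu.

(* Young diagram of nu, cells (row, column), 0-indexed. *)
Definition diagram (m : nat) (nu : seq nat) : {set 'I_m * 'I_m} :=
  [set c : 'I_m * 'I_m | (c.2 : nat) < nth 0 nu c.1].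

(* A Young tableau of shape nu |- m: a bijection from the points 'I_m
   to the cells of the diagram (injective into the diagram, which has m cells). *)
Definition is_tableau (m : nat) (nu : seq nat) (T : {ffun 'I_m -> 'I_m * 'I_m}) : bool :=
  injectiveb T && [forall x, T x \in diagram m nu].

Definition colgroup (m : nat) (T : {ffun 'I_m -> 'I_m * 'I_m}) : {set 'S_m} :=
  [set s : 'S_m | [forall x, (T (s x)).2 == (T x).2]].

(* A tabloid is recorded as the map point |-> row. *)
Definition tabloid_of (m : nat) (T : {ffun 'I_m -> 'I_m * 'I_m}) : {ffun 'I_m -> 'I_m} :=
  [ffun x => (T x).1].

Definition tabvec (m : nat) := {ffun {ffun 'I_m -> 'I_m} -> rat}.

(* sigma T: the tableau with sigma(x) in the cell where x was. *)
Definition act_tableau (m : nat) (s : 'S_m) (T : {ffun 'I_m -> 'I_m * 'I_m})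
  : {ffun 'I_m -> 'I_m * 'I_m} := [ffun y => T ((s^-1)%g y)].

Definition polytabloid (m : nat) (T : {ffun 'I_m -> 'I_m * 'I_m}) : tabvec m :=
  [ffun f => \sum_(s in colgroup T)
      (-1) ^+ (odd_perm s) * ((tabloid_of (act_tableau s T) == f)%:R)]%R.

Definition in_specht (m : nat) (nu : seq nat) (v : tabvec m) : Prop :=
  exists c : {ffun {ffun 'I_m -> 'I_m * 'I_m} -> rat},
    v = [ffun f => \sum_(T | is_tableau nu T) c T * polytabloid T f]%R.

(* Action of g on the permutation module: (g v)({t}) = v(g^-1 {t}). *)
Definition perm_act (m : nat) (g : 'S_m) (v : tabvec m) : tabvec m :=
  [ffun f : {ffun 'I_m -> 'I_m} => v [ffun y => f (g y)]].

(* K = S_{2(n-t)} x H_t inside S_{2n}: S_{2(n-t)} acts on the points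
   {0,...,2(n-t)-1}; H_t is the stabiliser of the perfect matching
   {2k,2k+1} (k = n-t,...,n-1) of the remaining 2t points. *)
Definition Kset (n t : nat) : {set 'S_(n.*2)} :=
  [set g : 'S_(n.*2) |
     [forall x : 'I_(n.*2), ((x : nat) < (n - t).*2) == ((g x : nat) < (n - t).*2)] &&
     [forall x : 'I_(n.*2), forall y : 'I_(n.*2),
        [&& (n - t).*2 <= x, (n - t).*2 <= y & (x : nat)./2 == (y : nat)./2] ==>
        ((g x : nat)./2 == (g y : nat)./2)]].

From mathcomp Require Import all_boot all_order all_algebra all_fingroup.
From mathcomp Require Import zify.

Set Implicit Arguments.
Unset Strict Implicit.
Unset Printing Implicit Defensive.

(* For an even partition nu, non-fatness amounts to nu_1 < 2(n-t): if the first
   row has length 2(n-t), the other rows are even and sum to 2t, so they lie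
   revlex-above (2,...,2).  Then a tableau of shape nu has fewer than 2(n-t)
   columns, so two of the points 0, ..., 2(n-t)-1 share a column; their
   transposition lies in S_{2(n-t)} and negates the polytabloid.  Hence the
   S_{2(n-t)}-symmetrizer kills S^nu, whereas it multiplies a K-invariant
   vector by |S_{2(n-t)}|. *)

Lemma revlex_le_cons x mu la : revlex_le mu la -> revlex_le (x :: mu) (x :: la).
Proof.
case=> [-> | [j [eq_prefix lt_j]]]; first by left.
by right; exists j.+1; split=> // [[|i]] //= /eq_prefix.
Qed.

Lemma revlex_lt_head mu la : nth 0 mu 0 < nth 0 la 0 -> revlex_le mu la.
Proof. by right; exists 0. Qed.

Lemma revlex_le_nseq2_double t la :
  all (fun x => 0 < x) la -> sumn la = t -> revlex_le (nseq t 2) (map double la).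
Proof.
elim: la t => [|x la IHla] t /=; first by move=> _ <-; left.
case/andP=> x_gt0 la_gt0 <-; have [-> | x_neq1] := eqVneq x 1.
  exact/revlex_le_cons/IHla.
by apply: revlex_lt_head; rewrite /= nth_nseq; case: ifP; lia.
Qed.

Lemma even_nonfat_head_lt n t nu :
  t < n -> even_partition n nu -> ~ fat n t nu -> nth 0 nu 0 < (n - t).*2.
Proof.
move=> lt_tn [[|x la] [/and3P[_ /= la_gt0 /eqP sum_la] ->]] nonfat /=; first by lia.
case/andP: la_gt0 => _ la_gt0.
rewrite ltnNge leq_eqVlt; apply/negP => /orP[/eqP head | lt_head]; apply: nonfat.
  rewrite /fat head; apply/revlex_le_cons/revlex_le_nseq2_double => //; lia.
exact: revlex_lt_head.
Qed.

Lemma partition_nth_le_head m nu i : is_partition m nu -> nth 0 nu i <= nth 0 nu 0.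
Proof.
case/and3P=> sorted_nu _ _; have [lt_i | ge_i] := ltnP i (size nu).
  by apply: (sorted_leq_nth (rev_trans leq_trans) leqnn) => //; rewrite inE; lia.
by rewrite nth_default.
Qed.

Lemma tableau_col_lt_head m nu (T : {ffun 'I_m -> 'I_m * 'I_m}) x :
  is_partition m nu -> is_tableau nu T -> (T x).2 < nth 0 nu 0.
Proof.
move=> nu_part /andP[_ /forallP/(_ x)]; rewrite inE => lt_col.
exact: leq_trans lt_col (partition_nth_le_head _ nu_part).
Qed.

Lemma ord_collision m a b (f : 'I_m -> nat) :
  b < a -> a <= m -> (forall x, f x < b) ->
  exists x y : 'I_m, [/\ x != y, x < a, y < a & f x = f y].
Proof.
move=> lt_ba le_am f_lt.
pose h (x : 'I_a) : 'I_b := Ordinal (f_lt (widen_ord le_am x)).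
have /injectivePn[x [y neq_xy eq_hxy]] : ~~ injectiveb h.
  by apply/injectiveP => /leq_card; rewrite !card_ord; lia.
exists (widen_ord le_am x), (widen_ord le_am y).
by split=> //; [exact: ltn_ord x | exact: ltn_ord y | move/(congr1 val): eq_hxy].
Qed.

Definition Sym_prefix m a : {group 'S_m} := 'C([set x : 'I_m | a <= x] | 'P)%G.

Lemma Sym_prefix_fixed m a (g : 'S_m) (x : 'I_m) : g \in Sym_prefix m a -> a <= x -> g x = x.
Proof. by move/astabP=> g_fix le_ax; apply: g_fix; rewrite inE. Qed.

Lemma tperm_Sym_prefix m a (x y : 'I_m) :
  x < a -> y < a -> tperm x y \in Sym_prefix m a.
Proof.
move=> lt_xa lt_ya; apply/astabP => z; rewrite inE /= => le_az.
have neq_z (w : 'I_m) : w < a -> w != z.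
  by move=> lt_wa; apply: contraTneq le_az => <-; rewrite -ltnNge.
by rewrite apermE tpermD ?neq_z.
Qed.

Lemma Sym_prefix_sub_Kset n t : Sym_prefix n.*2 (n - t).*2 \subset Kset n t.
Proof.
apply/subsetP => g /Sym_prefix_fixed g_fix; rewrite inE; apply/andP; split.
  apply/forallP => x; have [le_x | lt_x] := leqP (n - t).*2 x.
    by rewrite g_fix // ltnNge le_x.
  rewrite /= ltnNge; apply/negP => le_gx.
  by move: lt_x; rewrite -(perm_inj (g_fix _ le_gx)) ltnNge le_gx.
apply/forallP => x; apply/forallP => y; apply/implyP => /and3P[le_x le_y].
by rewrite !g_fix.
Qed.

Section Symmetrizer.

Import GRing.Theory Num.Theory.
Local Open Scope ring_scope.

Lemma sum_group_signed_eq0 (R : numDomainType) (gT : finGroupType) (G : {group gT})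
    (F : gT -> R) (tau : gT) :
  tau \in G -> (forall g, F (tau * g)%g = - F g) -> \sum_(g in G) F g = 0.
Proof.
move=> G_tau F_tau; set S := \sum_(g in G) F g.
have S_opp : S = - S.
  rewrite {1}/S (reindex_inj (mulgI tau)) /= -sumrN.
  by apply: eq_big => [g | g _]; rewrite ?groupMl ?F_tau.
have : S *+ 2 == 0 by rewrite mulr2n {1}S_opp addNr.
by rewrite mulrn_eq0 => /eqP.
Qed.

Lemma polytabloid_tperm m (T : {ffun 'I_m -> 'I_m * 'I_m}) (x y : 'I_m)
    (f : {ffun 'I_m -> 'I_m}) :
  x != y -> (T x).2 = (T y).2 ->
  polytabloid T [ffun z => f (tperm x y z)] = - polytabloid T f.
Proof.
move=> neq_xy col_xy; rewrite !ffunE (reindex_inj (mulIg (tperm x y))) /= -sumrN.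
apply: eq_big => [s | s _].
  rewrite !inE; apply: eq_forallb => z; rewrite permM.
  by case: tpermP => [->|->|//]; rewrite col_xy.
have -> : (tabloid_of (act_tableau (s * tperm x y) T) == [ffun z => f (tperm x y z)])
          = (tabloid_of (act_tableau s T) == f).
  apply/eqP/eqP => /ffunP eq_tab; apply/ffunP => z.
    by have := eq_tab (tperm x y z); rewrite !ffunE invMg permM tpermV tpermK.
  by rewrite !ffunE invMg permM tpermV -eq_tab !ffunE.
by rewrite odd_permM odd_tperm neq_xy signr_addb expr1 mulrN1 mulNr.
Qed.

Lemma Sym_prefix_polytabloid_eq0 m a (T : {ffun 'I_m -> 'I_m * 'I_m}) (x y : 'I_m)
    (f : {ffun 'I_m -> 'I_m}) :
  x != y -> (x < a)%N -> (y < a)%N -> (T x).2 = (T y).2 ->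
  \sum_(g in Sym_prefix m a) polytabloid T [ffun z => f (g z)] = 0.
Proof.
move=> neq_xy lt_xa lt_ya col_xy.
apply: (sum_group_signed_eq0 (tperm_Sym_prefix lt_xa lt_ya)) => g.
rewrite -(polytabloid_tperm _ neq_xy col_xy); congr (polytabloid T _).
by apply/ffunP => z; rewrite !ffunE permM.
Qed.

Lemma in_specht_sum_act_eq0 m nu (G : {set 'S_m}) (v : tabvec m) :
  in_specht nu v ->
  (forall T (f : {ffun 'I_m -> 'I_m}), is_tableau nu T ->
     \sum_(g in G) polytabloid T [ffun z => f (g z)] = 0) ->
  forall f, \sum_(g in G) perm_act g v f = 0.
Proof.
move=> [c ->] symmetrizer_eq0 f.
under eq_bigr do rewrite [perm_act _ _ _]ffunE ffunE.
rewrite exchange_big big1 // => T T_tab.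
by rewrite -mulr_sumr symmetrizer_eq0 ?mulr0.
Qed.

Lemma fixed_sum_act_eq0 m (G : {group 'S_m}) (v : tabvec m) :
  (forall g, g \in G -> perm_act g v = v) ->
  (forall f, \sum_(g in G) perm_act g v f = 0) -> v = 0.
Proof.
move=> v_fixed sum_eq0; apply/ffunP => f.
have : #|G|%:R * v f = 0.
  rewrite -(sum_eq0 f) mulr_natl -sumr_const.
  by apply: eq_bigr => g /v_fixed ->.
by move/eqP; rewrite mulf_eq0 pnatr_eq0 (negbTE (lt0n_neq0 (cardG_gt0 G))) ffunE => /eqP.
Qed.

End Symmetrizer.

Theorem mainTheorem16 (n t : nat) (nu : seq nat) :
  t.*2 < n ->
  is_partition n.*2 nu ->
  even_partition n nu ->
  ~ fat n t nu ->
  forall v : tabvec n.*2,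
    in_specht nu v ->
    (forall g, g \in Kset n t -> perm_act g v = v) ->
    v = 0%R.
Proof.
move=> lt_2t_n nu_part nu_even nonfat v v_specht v_Kfixed.
have head_lt : nth 0 nu 0 < (n - t).*2.
  by apply: even_nonfat_head_lt nu_even nonfat; lia.
have le_prefix : (n - t).*2 <= n.*2 by rewrite leq_double leq_subr.
apply: (@fixed_sum_act_eq0 _ (Sym_prefix n.*2 (n - t).*2)).
  by move=> g /(subsetP (Sym_prefix_sub_Kset n t)); exact: v_Kfixed.
apply: (in_specht_sum_act_eq0 v_specht) => T f T_tab.
have [x [y [neq_xy lt_x lt_y col_xy]]] :=
  ord_collision head_lt le_prefix (fun x => tableau_col_lt_head x nu_part T_tab).
exact: Sym_prefix_polytabloid_eq0 f neq_xy lt_x lt_y (val_inj col_xy).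
Qed.
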